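(* For all integers $k\geq 2$ and $\ell\geq 2$, $$\lambda(k)\lambda(\ell)=\frac{1}{2^{\ell}}\sum_{i=0}^{k-1}2^{-i}\binom{\ell+i-1}{i}\sigma(\ell+i,k-i)+\frac{1}{2^{k}}\sum_{j=0}^{\ell-1}2^{-j}\binom{k+j-1}{j}\sigma(k+j,\ell-j).$$
   Context: For integers $t\geq 1$, $n\geq 1$ let $S_n^{(t)}=\sum_{k=1}^{n}\frac{1}{(2k-1)^t}$, and for integers $s\geq 2$, $t\geq 1$ let $\sigma(s,t)=\sum_{n\geq 1}\frac{S_n^{(t)}}{n^s}$. For real $s>1$, $\lambda(s)=\sum_{n\geq 1}\frac{1}{(2n-1)^s}$. *)

From Stdlib Require Import Reals.
From Coquelicot Require Import Coquelicot.
Open Scope R_scope.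

Definition S_odd (t n : nat) : R :=
  sum_n_m (fun k => / (INR (2 * k - 1)) ^ t) 1 n.

(* sigma(s,t) = sum_{n>=1} S_n^{(t)} / n^s  (index shifted: m = n-1 >= 0) *)
Definition sigmaOdd (s t : nat) : R :=
  Series (fun m => S_odd t (S m) / (INR (S m)) ^ s).

(* lambda(s) = sum_{n>=1} 1/(2n-1)^s  (index shifted: m = n-1 >= 0) *)
Definition lambdaOdd (s : nat) : R :=
  Series (fun m => / (INR (2 * m + 1)) ^ s).

Definition binomR (n k : nat) : R := Binomial.C n k.

(** Expand lambda(k) lambda(l) as a Cauchy product: its N-th term is the sum over
    m <= N of 1 / ((2m+1)^k (2(N-m)+1)^l).  Since (2m+1) + (2(N-m)+1) = 2(N+1),
    the partial fraction expansion of 1/(x^k y^l) along x + y = c turns every summand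
    into terms 1/((2(N+1))^(l+i) (2m+1)^(k-i)) plus the symmetric ones; summing over m
    produces S_(N+1)^(k-i), and summing over N produces sigma(l+i, k-i).  All terms are
    nonnegative, so each of these finitely many series converges by comparison with
    the convergent Cauchy product. *)

From Stdlib Require Import Reals Lia Lra.
From Coquelicot Require Import Coquelicot.
Open Scope R_scope.

Lemma sum_n_Rplus (f g : nat -> R) n :
  sum_n (fun i => f i + g i) n = sum_n f n + sum_n g n.
Proof. exact (sum_n_plus f g n). Qed.

Lemma sum_n_Rmult_l (c : R) (f : nat -> R) n :
  sum_n (fun i => c * f i) n = c * sum_n f n.
Proof. exact (sum_n_mult_l c f n). Qed.

Lemma sum_n_Sr (f : nat -> R) n : sum_n f (S n) = sum_n f n + f (S n).
Proof. exact (sum_Sn f n). Qed.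

Lemma sum_n_Sl (f : nat -> R) n : sum_n f (S n) = f O + sum_n (fun i => f (S i)) n.
Proof. unfold sum_n. rewrite sum_Sn_m, sum_n_m_S by lia. reflexivity. Qed.

Lemma sum_n_exchange (f : nat -> nat -> R) N K :
  sum_n (fun m => sum_n (fun i => f m i) K) N = sum_n (fun i => sum_n (fun m => f m i) N) K.
Proof.
  induction N as [|N IH].
  - rewrite sum_O. apply sum_n_ext; intro i. rewrite sum_O. reflexivity.
  - rewrite sum_n_Sr, IH, <- sum_n_Rplus. apply sum_n_ext; intro i. rewrite sum_n_Sr. reflexivity.
Qed.

Lemma sum_n_rev (f : nat -> R) N : sum_n (fun m => f (N - m)%nat) N = sum_n f N.
Proof.
  induction N as [|N IH].
  - rewrite !sum_O. reflexivity.
  - rewrite sum_n_Sl, sum_n_Sr, <- IH, Nat.sub_0_r, Rplus_comm. reflexivity.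
Qed.

Lemma sum_n_nonneg (f : nat -> R) n : (forall i, 0 <= f i) -> 0 <= sum_n f n.
Proof.
  intro Hf. induction n as [|n IH].
  - rewrite sum_O. apply Hf.
  - rewrite sum_n_Sr. specialize (Hf (S n)). lra.
Qed.

Lemma sum_n_term_le (f : nat -> R) n i : (forall j, 0 <= f j) -> (i <= n)%nat -> f i <= sum_n f n.
Proof.
  intros Hf Hi. induction n as [|n IH].
  - replace i with O by lia. rewrite sum_O. lra.
  - rewrite sum_n_Sr. pose proof (Hf (S n)). destruct (Nat.eq_dec i (S n)) as [->|].
    + pose proof (sum_n_nonneg f n Hf). lra.
    + specialize (IH ltac:(lia)). lra.
Qed.

Lemma ex_series_nonneg_le (a b : nat -> R) :
  (forall n, 0 <= a n <= b n) -> ex_series b -> ex_series a.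
Proof.
  intros Hab Hb. apply (@ex_series_le R_AbsRing R_CompleteNormedModule a b); [|exact Hb].
  intro n. change (norm (a n)) with (Rabs (a n)). rewrite Rabs_pos_eq; apply Hab.
Qed.

Lemma ex_series_sum_n (F : nat -> nat -> R) K :
  (forall i, (i <= K)%nat -> ex_series (F i)) -> ex_series (fun N => sum_n (fun i => F i N) K).
Proof.
  induction K as [|K IH]; intro HF.
  - apply (ex_series_ext (F O)); [intro N; rewrite sum_O; reflexivity | apply HF; lia].
  - apply (ex_series_ext (fun N => plus (sum_n (fun i => F i N) K) (F (S K) N))).
    + intro N. rewrite sum_Sn. reflexivity.
    + apply (@ex_series_plus R_AbsRing R_NormedModule); [apply IH; intros i Hi |]; apply HF; lia.
Qed.

Lemma Series_sum_n (F : nat -> nat -> R) K :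
  (forall i, (i <= K)%nat -> ex_series (F i)) ->
  Series (fun N => sum_n (fun i => F i N) K) = sum_n (fun i => Series (F i)) K.
Proof.
  induction K as [|K IH]; intro HF.
  - rewrite sum_O. apply Series_ext. intro N. apply sum_O.
  - rewrite sum_n_Sr, <- IH by (intros; apply HF; lia).
    rewrite <- Series_plus; [| apply ex_series_sum_n; intros; apply HF; lia | apply HF; lia].
    apply Series_ext. intro N. apply sum_n_Sr.
Qed.

Lemma ex_series_sum_n_term (F : nat -> nat -> R) K :
  (forall i N, 0 <= F i N) -> ex_series (fun N => sum_n (fun i => F i N) K) ->
  forall i, (i <= K)%nat -> ex_series (F i).
Proof.
  intros HF Hsum i Hi. apply (ex_series_nonneg_le _ _) with (2 := Hsum). intro N.
  split; [apply HF | exact (sum_n_term_le (fun j => F j N) K i (fun j => HF j N) Hi)].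
Qed.

(* With a = 1/x, b = 1/y and u = 1/(x+y), [pf_decomposition] is the partial fraction
   expansion of 1/(x^(K+1) y^(L+1)); the hypothesis u (a + b) = a b encodes u = 1/(x+y). *)
Definition pf_part (K L : nat) (a u : R) : R :=
  sum_n (fun i => Binomial.C (L + i) i * u ^ (S L + i) * a ^ (S K - i)) K.

Lemma pf_part_0l L a u : pf_part 0 L a u = u ^ S L * a.
Proof. unfold pf_part. rewrite sum_O, !Nat.add_0_r, C_n_0. simpl. ring. Qed.

Lemma pf_part_S0 K b u : pf_part (S K) 0 b u = b * pf_part K 0 b u + u ^ S (S K) * b.
Proof.
  unfold pf_part. rewrite sum_n_Sr, <- sum_n_Rmult_l. simpl (0 + S K)%nat.
  rewrite C_n_n. replace (S (S K) - S K)%nat with 1%nat by lia. f_equal.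
  - apply sum_n_ext_loc; intros i Hi. replace (S (S K) - i)%nat with (S (S K - i)) by lia.
    simpl. ring.
  - simpl. ring.
Qed.

Lemma pf_part_SS K L a u :
  pf_part (S K) (S L) a u = u * pf_part (S K) L a u + u * pf_part K (S L) a u.
Proof.
  unfold pf_part. rewrite !sum_n_Sl, Rmult_plus_distr_l, Rplus_assoc, <- !sum_n_Rmult_l,
    <- sum_n_Rplus, !Nat.add_0_r, !C_n_0.
  f_equal.
  - simpl. ring.
  - apply sum_n_ext; intro i. simpl.
    rewrite !Nat.add_succ_r, <- (pascal (S (L + i)) i) by lia.
    change (u ^ S (L + i)) with (u * u ^ (L + i)). ring.
Qed.

Lemma pf_decomposition_0l L a b u :
  u * (a + b) = a * b -> a * b ^ S L = pf_part 0 L a u + pf_part L 0 b u.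
Proof.
  intro Hu. rewrite pf_part_0l. induction L as [|L IH].
  - unfold pf_part. rewrite sum_O, C_n_0.
    transitivity (u * (a + b)); [rewrite Hu | ]; simpl; ring.
  - rewrite pf_part_S0.
    replace (pf_part L 0 b u) with (a * b ^ S L - u ^ S L * a) by lra.
    transitivity (u ^ S L * (u * (a + b)) + b * (a * b ^ S L - u ^ S L * a));
      [rewrite Hu | ]; simpl; ring.
Qed.

Theorem pf_decomposition K L a b u :
  u * (a + b) = a * b -> a ^ S K * b ^ S L = pf_part K L a u + pf_part L K b u.
Proof.
  intro Hu. revert L. induction K as [|K IHK]; intro L.
  - rewrite pow_1. exact (pf_decomposition_0l L a b u Hu).
  - induction L as [|L IHL].
    + rewrite pow_1, Rmult_comm, Rplus_comm. apply pf_decomposition_0l. lra.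
    + rewrite pf_part_SS, (pf_part_SS L K b u).
      transitivity (u * (a ^ S (S K) * b ^ S L) + u * (a ^ S K * b ^ S (S L))).
      * transitivity (a ^ S K * b ^ S L * (u * (a + b))); [rewrite Hu; simpl; ring | simpl; ring].
      * rewrite IHL, IHK. ring.
Qed.

Lemma S_odd_succ t N : S_odd t (S N) = sum_n (fun m => / INR (2 * m + 1) ^ t) N.
Proof.
  unfold S_odd, sum_n. rewrite <- sum_n_m_S. apply sum_n_m_ext; intro m.
  do 3 f_equal. lia.
Qed.

Lemma inv_odd_pow_pos s m : 0 < / INR (2 * m + 1) ^ s.
Proof. apply Rinv_0_lt_compat, pow_lt, lt_0_INR. lia. Qed.

Lemma is_series_inv_succ_diff : is_series (fun n => / INR (n + 1) - / INR (n + 2)) 1.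
Proof.
  assert (Hpart : forall n, sum_n (fun n => / INR (n + 1) - / INR (n + 2)) n = 1 - / INR (n + 2)).
  { induction n as [|n IH].
    - rewrite sum_O. simpl. field.
    - rewrite sum_n_Sr, IH. replace (S n + 1)%nat with (n + 2)%nat by lia. lra. }
  change (is_lim_seq (sum_n (fun n => / INR (n + 1) - / INR (n + 2))) 1).
  apply (is_lim_seq_ext (fun n => 1 - / INR (n + 2))); [intro n; symmetry; apply Hpart|].
  replace (Finite 1) with (Finite (1 - 0)) by (f_equal; ring).
  apply is_lim_seq_minus'; [apply is_lim_seq_const|].
  replace (Finite 0) with (Rbar_inv p_infty) by reflexivity.
  apply is_lim_seq_inv; [|discriminate].
  apply (is_lim_seq_incr_n INR 2), is_lim_seq_INR.
Qed.

Lemma ex_series_inv_odd_pow s : (2 <= s)%nat -> ex_series (fun m => / INR (2 * m + 1) ^ s).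
Proof.
  intro Hs. apply (ex_series_nonneg_le _ (fun m => 2 * (/ INR (m + 1) - / INR (m + 2)))).
  2: { apply (ex_series_scal_l (V := R_NormedModule) 2). exists 1. apply is_series_inv_succ_diff. }
  intro m. split; [left; apply inv_odd_pow_pos|].
  assert (H1 : 1 <= INR (2 * m + 1)) by (apply (le_INR 1); lia).
  apply Rle_trans with (/ INR (2 * m + 1) ^ 2).
  - apply Rinv_le_contravar; [apply pow_lt; lra | apply Rle_pow; assumption].
  - rewrite !plus_INR, mult_INR. simpl INR. pose proof (pos_INR m).
    replace (2 * (/ (INR m + 1) - / (INR m + (1 + 1))))
      with (/ ((INR m + 1) * (INR m + 2) / 2)) by (field; lra).
    apply Rinv_le_contravar; [apply Rdiv_lt_0_compat|]; simpl; nra.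
Qed.

Definition odd_cauchy_term (k l N : nat) : R :=
  sum_f_R0 (fun m => / INR (2 * m + 1) ^ k * / INR (2 * (N - m) + 1) ^ l) N.

Lemma is_series_odd_cauchy_term k l :
  (2 <= k)%nat -> (2 <= l)%nat -> is_series (odd_cauchy_term k l) (lambdaOdd k * lambdaOdd l).
Proof.
  intros Hk Hl. unfold odd_cauchy_term.
  apply (is_series_mult_pos (fun m => / INR (2 * m + 1) ^ k) (fun m => / INR (2 * m + 1) ^ l)).
  - apply Series_correct, ex_series_inv_odd_pow, Hk.
  - apply Series_correct, ex_series_inv_odd_pow, Hl.
  - intro m. left. apply inv_odd_pow_pos.
  - intro m. left. apply inv_odd_pow_pos.
Qed.

Definition sigma_summand (k l i N : nat) : R :=
  / 2 ^ i * binomR (l + i - 1) i * (S_odd (k - i) (S N) / INR (S N) ^ (l + i)).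

Definition sigma_part (k l N : nat) : R :=
  / 2 ^ l * sum_n (fun i => sigma_summand k l i N) (k - 1).

(* Here x = 2m+1 and x + y = 2(N+1), so u^(L+1+i) = 2^-(L+1+i) (N+1)^-(L+1+i). *)
Lemma sum_pf_part_odd K L N :
  sum_n (fun m => pf_part K L (/ INR (2 * m + 1)) (/ INR (2 * N + 2))) N = sigma_part (S K) (S L) N.
Proof.
  unfold pf_part, sigma_part, sigma_summand. rewrite sum_n_exchange, <- sum_n_Rmult_l.
  replace (S K - 1)%nat with K by lia.
  apply sum_n_ext; intro i.
  rewrite sum_n_Rmult_l, S_odd_succ, (sum_n_ext _ (fun m => / INR (2 * m + 1) ^ (S K - i))) by (intro; apply pow_inv).
  replace (S L + i - 1)%nat with (L + i)%nat by lia.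
  replace (INR (2 * N + 2)) with (2 * INR (S N)) by (rewrite S_INR, plus_INR, mult_INR; simpl; ring).
  unfold binomR, Rdiv. rewrite pow_inv, Rpow_mult_distr, (pow_add 2), !Rinv_mult.
  (* the equation lives in Coquelicot's monoid carrier, which [ring] does not recognise *)
  lazymatch goal with |- ?x = ?y => change (x = y :> R) end. ring.
Qed.

Lemma odd_cauchy_term_split K L N :
  odd_cauchy_term (S K) (S L) N = sigma_part (S K) (S L) N + sigma_part (S L) (S K) N.
Proof.
  rewrite <- !sum_pf_part_odd, <- (sum_n_rev (fun m => pf_part L K _ _)), <- sum_n_Rplus.
  unfold odd_cauchy_term. rewrite <- sum_n_Reals.
  apply sum_n_ext_loc; intros m Hm.
  rewrite <- !pow_inv. apply pf_decomposition.
  assert (0 < INR (2 * m + 1)) by (apply lt_0_INR; lia).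
  assert (0 < INR (2 * (N - m) + 1)) by (apply lt_0_INR; lia).
  replace (INR (2 * N + 2)) with (INR (2 * m + 1) + INR (2 * (N - m) + 1))
    by (rewrite <- plus_INR; f_equal; lia).
  field. repeat split; apply Rgt_not_eq; lra.
Qed.

Lemma binomR_nonneg n i : 0 <= binomR n i.
Proof.
  apply Rle_mult_inv_pos; [apply pos_INR | apply Rmult_lt_0_compat; apply INR_fact_lt_0].
Qed.

Lemma S_odd_nonneg t N : 0 <= S_odd t (S N).
Proof. rewrite S_odd_succ. apply sum_n_nonneg. intro m. left. apply inv_odd_pow_pos. Qed.

Lemma sigma_summand_nonneg k l i N : 0 <= sigma_summand k l i N.
Proof.
  assert (H2 : 0 < / 2 ^ i) by (apply Rinv_0_lt_compat, pow_lt; lra).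
  assert (HN : 0 < / INR (S N) ^ (l + i)) by (apply Rinv_0_lt_compat, pow_lt, lt_0_INR; lia).
  pose proof (binomR_nonneg (l + i - 1) i). pose proof (S_odd_nonneg (k - i) N).
  unfold sigma_summand, Rdiv. apply Rmult_le_pos; apply Rmult_le_pos; lra.
Qed.

Lemma sigma_part_nonneg k l N : 0 <= sigma_part k l N.
Proof.
  apply Rmult_le_pos; [left; apply Rinv_0_lt_compat, pow_lt; lra |].
  apply sum_n_nonneg. intro i. apply sigma_summand_nonneg.
Qed.

Lemma Series_sigma_part k l :
  ex_series (sigma_part k l) ->
  Series (sigma_part k l) =
    / 2 ^ l * sum_n_m (fun i => / 2 ^ i * binomR (l + i - 1) i * sigmaOdd (l + i) (k - i)) 0 (k - 1).
Proof.
  intro Hex.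
  assert (Hsum : ex_series (fun N => sum_n (fun i => sigma_summand k l i N) (k - 1))).
  { apply (ex_series_ext (fun N => 2 ^ l * sigma_part k l N)).
    - intro N. unfold sigma_part.
      rewrite <- Rmult_assoc, Rinv_r, Rmult_1_l by (apply pow_nonzero; lra). reflexivity.
    - apply (ex_series_scal_l (V := R_NormedModule)), Hex. }
  unfold sigma_part at 1. rewrite Series_scal_l, Series_sum_n.
  - f_equal. apply sum_n_m_ext; intro i. unfold sigma_summand. apply Series_scal_l.
  - apply ex_series_sum_n_term; [apply sigma_summand_nonneg | exact Hsum].
Qed.

Theorem mainTheorem14 (k l : nat) (hk : (2 <= k)%nat) (hl : (2 <= l)%nat) :
  lambdaOdd k * lambdaOdd l =
    / 2 ^ l * sum_n_m (fun i => / 2 ^ i * binomR (l + i - 1)%nat i * sigmaOdd (l + i)%nat (k - i)%nat) 0 (k - 1)%nat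
  + / 2 ^ k * sum_n_m (fun j => / 2 ^ j * binomR (k + j - 1)%nat j * sigmaOdd (k + j)%nat (l - j)%nat) 0 (l - 1)%nat.
Proof.
  destruct k as [|K]; [lia|]. destruct l as [|L]; [lia|].
  pose proof (is_series_odd_cauchy_term _ _ hk hl) as Hprod.
  assert (Hhalves : forall N,
    0 <= sigma_part (S K) (S L) N <= odd_cauchy_term (S K) (S L) N /\
    0 <= sigma_part (S L) (S K) N <= odd_cauchy_term (S K) (S L) N).
  { intro N. rewrite odd_cauchy_term_split.
    pose proof (sigma_part_nonneg (S K) (S L) N). pose proof (sigma_part_nonneg (S L) (S K) N). lra. }
  assert (Hex1 : ex_series (sigma_part (S K) (S L)))
    by (apply (ex_series_nonneg_le _ (odd_cauchy_term (S K) (S L))); [apply Hhalves | eexists; eauto]).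
  assert (Hex2 : ex_series (sigma_part (S L) (S K)))
    by (apply (ex_series_nonneg_le _ (odd_cauchy_term (S K) (S L))); [apply Hhalves | eexists; eauto]).
  rewrite <- (is_series_unique _ _ Hprod), (Series_ext _ _ (odd_cauchy_term_split K L)),
    Series_plus, !Series_sigma_part by assumption.
  reflexivity.
Qed.
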